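(* Let $X$ be a space and fix $x_0\in X$. Then $X$ is wep-connected if and only if for each $x\in X$ there is a path $p:I\to X$ from $x_0$ to $x$ such that for every open neighborhood $\mathcal U$ of $p$ in $P(X,x_0)$ there is an open neighborhood $V$ of $x$ in $X$ such that for every $v\in V$ there is a path $q\in\mathcal U$ from $x_0$ to $v$.
   Context: $P(X)$ is the space of paths $I=[0,1]\to X$ with the compact-open topology and $P(X,x_0)=\{\alpha\in P(X):\alpha(0)=x_0\}$ with the subspace topology. A path $p:I\to X$ is well-ended if for every open neighborhood $\mathcal U$ of $p$ in $P(X)$ there are open neighborhoods $V_0,V_1$ of $p(0),p(1)$ in $X$ such that for all $a\in V_0,b\in V_1$ there is $q\in\mathcal U$ with $q(0)=a$, $q(1)=b$. $X$ is wep-connected if any two points of $X$ are joined by a well-ended path in $X$. *)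

From Stdlib Require Import Reals List.
Open Scope R_scope.

Record TopSpace := {
  carrier :> Type;
  is_open : (carrier -> Prop) -> Prop;
  open_full : is_open (fun _ => True);
  open_inter : forall U V, is_open U -> is_open V -> is_open (fun x => U x /\ V x);
  open_union : forall (J : Type) (F : J -> carrier -> Prop),
      (forall j, is_open (F j)) -> is_open (fun x => exists j, F j x)
}.

Definition I : Type := { t : R | 0 <= t <= 1 }.
Lemma I0_prf : 0 <= 0 <= 1. Proof. split; [apply Rle_refl | apply Rle_0_1]. Qed.
Lemma I1_prf : 0 <= 1 <= 1. Proof. split; [apply Rle_0_1 | apply Rle_refl]. Qed.
Definition i0 : I := exist _ 0 I0_prf.
Definition i1 : I := exist _ 1 I1_prf.

Definition is_path {X : TopSpace} (f : I -> X) : Prop :=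
  forall U : X -> Prop, is_open X U ->
    exists O : R -> Prop, Rtopology.open_set O /\
      forall t : I, U (f t) <-> O (proj1_sig t).

(* Subbasic set V(K,U) = {f | f(K) ⊆ U} of the compact-open topology,
   for K compact in I (a compact subset of R contained in [0,1]) and U open. *)
Definition CO_sub {X : TopSpace} (K : R -> Prop) (U : X -> Prop) (f : I -> X) : Prop :=
  forall t : I, K (proj1_sig t) -> U (f t).

Definition CO_subbasic {X : TopSpace} (KU : (R -> Prop) * (X -> Prop)) : Prop :=
  (forall t, fst KU t -> 0 <= t <= 1) /\ Rtopology.compact (fst KU) /\ is_open X (snd KU).

(* Open sets of P(X) (compact-open topology): W is open iff every path in W
   lies in a finite intersection of subbasic sets contained (among paths) in W. *)
Definition CO_open {X : TopSpace} (W : (I -> X) -> Prop) : Prop :=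
  forall f, is_path f -> W f ->
    exists l : list ((R -> Prop) * (X -> Prop)),
      (forall KU, In KU l -> CO_subbasic KU) /\
      (forall KU, In KU l -> CO_sub (fst KU) (snd KU) f) /\
      (forall g, is_path g -> (forall KU, In KU l -> CO_sub (fst KU) (snd KU) g) -> W g).

Definition well_ended {X : TopSpace} (p : I -> X) : Prop :=
  forall W : (I -> X) -> Prop, CO_open W -> W p ->
    exists V0 V1 : X -> Prop,
      is_open X V0 /\ V0 (p i0) /\ is_open X V1 /\ V1 (p i1) /\
      forall a b, V0 a -> V1 b ->
        exists q, is_path q /\ W q /\ q i0 = a /\ q i1 = b.

Definition wep_connected (X : TopSpace) : Prop :=
  forall x y : X, exists p : I -> X,
    is_path p /\ p i0 = x /\ p i1 = y /\ well_ended p.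

From Stdlib Require Import Reals Lra List Classical ProofIrrelevance.
From Stdlib Require Import Rtopology Ranalysis.
Open Scope R_scope.

(* Given paths p and q from x0 to x and to y that are well-ended at their far
   ends, the path "p backwards, then q" from x to y is well-ended.  A basic
   compact-open neighbourhood of it, given by finitely many pairs (K, U), is
   cut at t = 1/2 into basic neighbourhoods of p and of q: the halves of each K
   are rescaled to compact subsets of I.  Paths q1 and q2 from x0 to a and to b
   in these neighbourhoods glue back to a path from a to b in the original one.
   Conversely a path from x0 that is well-ended in particular satisfies the
   one-sided condition, with V0 containing x0. *)

Lemma I_val_inj (s s' : I) : proj1_sig s = proj1_sig s' -> s = s'.
Proof.
  destruct s as [a pa], s' as [b pb]; simpl; intros ->.
  f_equal; apply proof_irrelevance.
Qed.

Definition clampR (t : R) : R := Rmax 0 (Rmin t 1).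

Lemma clampR_in_I (t : R) : 0 <= clampR t <= 1.
Proof. unfold clampR, Rmax, Rmin; repeat destruct Rle_dec; lra. Qed.

Definition clamp (t : R) : I := exist _ (clampR t) (clampR_in_I t).

Lemma clamp_val (t : R) : 0 <= t <= 1 -> proj1_sig (clamp t) = t.
Proof. intros Ht; simpl; unfold clampR, Rmax, Rmin; repeat destruct Rle_dec; lra. Qed.

Lemma clamp_proj (s : I) : clamp (proj1_sig s) = s.
Proof. apply I_val_inj, clamp_val, proj2_sig. Qed.

Lemma open_lt (c : R) : open_set (fun t => t < c).
Proof.
  intros x Hx. assert (Hd : 0 < c - x) by lra. exists (mkposreal _ Hd).
  intros y Hy; unfold disc in Hy; simpl in Hy. apply Rabs_def2 in Hy. lra.
Qed.

Lemma open_gt (c : R) : open_set (fun t => c < t).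
Proof.
  intros x Hx. assert (Hd : 0 < x - c) by lra. exists (mkposreal _ Hd).
  intros y Hy; unfold disc in Hy; simpl in Hy. apply Rabs_def2 in Hy. lra.
Qed.

Lemma open_affine_preimage (a b : R) (O : R -> Prop) :
  open_set O -> open_set (fun t => O (a * t + b)).
Proof.
  intros HO. apply (continuity_P2 (fun t => a * t + b) O); auto.
  intro x; reg.
Qed.

Lemma closed_le (c : R) : closed_set (fun t => t <= c).
Proof.
  intros x Hx; unfold complementary in Hx.
  destruct (open_gt c x) as [d Hd]; [lra|].
  exists d; intros y Hy; specialize (Hd y Hy); unfold complementary; simpl in Hd; lra.
Qed.

Lemma closed_ge (c : R) : closed_set (fun t => c <= t).
Proof.
  intros x Hx; unfold complementary in Hx.
  destruct (open_lt c x) as [d Hd]; [lra|].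
  exists d; intros y Hy; specialize (Hd y Hy); unfold complementary; simpl in Hd; lra.
Qed.

Lemma compact_inter_closed (K P : R -> Prop) :
  compact K -> closed_set P -> compact (fun t => K t /\ P t).
Proof.
  intros HK HP. apply (compact_P4 K); [auto| |intros x []; auto].
  intros x Hx; unfold complementary in Hx.
  destruct (classic (K x)) as [Kx|Kx].
  - destruct (HP x ltac:(tauto)) as [d Hd].
    exists d; intros y Hy [_ Py]; exact (Hd y Hy Py).
  - destruct (compact_P2 K HK x Kx) as [d Hd].
    exists d; intros y Hy [Ky _]; exact (Hd y Hy Ky).
Qed.

Lemma CO_subbasic_image {X : TopSpace} (f : R -> R) (P : R -> Prop)
    (K : R -> Prop) (U : X -> Prop) :
  continuity f -> closed_set P ->
  (forall t, 0 <= t <= 1 -> P t -> 0 <= f t <= 1) ->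
  CO_subbasic (K, U) -> CO_subbasic (image_dir f (fun t => K t /\ P t), U).
Proof.
  intros Hf HP HfI [HKI [HK HU]]; simpl in *. split; [|split]; simpl; auto.
  - intros s [t [-> [Kt Pt]]]. exact (HfI t (HKI t Kt) Pt).
  - apply continuity_compact; auto. apply compact_inter_closed; auto.
Qed.

Definition left_half (K : R -> Prop) : R -> Prop :=
  image_dir (fun t => 1 - 2 * t) (fun t => K t /\ t <= 1/2).
Definition right_half (K : R -> Prop) : R -> Prop :=
  image_dir (fun t => 2 * t - 1) (fun t => K t /\ 1/2 <= t).

Lemma CO_subbasic_left_half {X : TopSpace} (K : R -> Prop) (U : X -> Prop) :
  CO_subbasic (K, U) -> CO_subbasic (left_half K, U).
Proof.
  apply CO_subbasic_image; [intro; reg|apply closed_le|intros; lra].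
Qed.

Lemma CO_subbasic_right_half {X : TopSpace} (K : R -> Prop) (U : X -> Prop) :
  CO_subbasic (K, U) -> CO_subbasic (right_half K, U).
Proof.
  apply CO_subbasic_image; [intro; reg|apply closed_ge|intros; lra].
Qed.

Definition rev_concat {X : TopSpace} (p q : I -> X) : I -> X := fun t =>
  if Rle_dec (proj1_sig t) (1/2) then p (clamp (1 - 2 * proj1_sig t))
  else q (clamp (2 * proj1_sig t - 1)).

Lemma rev_concat_i0 {X : TopSpace} (p q : I -> X) : rev_concat p q i0 = p i1.
Proof.
  unfold rev_concat; simpl; destruct Rle_dec; [|lra].
  f_equal; apply I_val_inj; rewrite clamp_val; simpl; lra.
Qed.

Lemma rev_concat_i1 {X : TopSpace} (p q : I -> X) : rev_concat p q i1 = q i1.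
Proof.
  unfold rev_concat; simpl; destruct Rle_dec; [lra|].
  f_equal; apply I_val_inj; rewrite clamp_val; simpl; lra.
Qed.

(* Pasting lemma: at t = 1/2 both halves take the value p i0 = q i0, which is
   why the open set below has a third disjunct covering that point. *)
Lemma rev_concat_path {X : TopSpace} (p q : I -> X) :
  is_path p -> is_path q -> p i0 = q i0 -> is_path (rev_concat p q).
Proof.
  intros Hp Hq E U HU.
  destruct (Hp U HU) as [Op [HOp Ep]]; destruct (Hq U HU) as [Oq [HOq Eq]].
  set (Lt := fun t => Op ((-2) * t + 1)); set (Rt := fun t => Oq (2 * t + (-1))).
  exists (fun t => (t < 1/2 /\ Lt t) \/ (1/2 < t /\ Rt t) \/ (Lt t /\ Rt t)).
  split.
  { unfold Lt, Rt; repeat apply open_set_P2; repeat apply open_set_P3;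
      auto using open_lt, open_gt, open_affine_preimage. }
  intros [t Ht]; unfold rev_concat, Lt, Rt; simpl proj1_sig.
  destruct (Rle_dec t (1/2)) as [Hle|Hgt].
  - rewrite Ep, clamp_val by lra.
    replace (1 - 2 * t) with ((-2) * t + 1) by ring.
    destruct (Rle_lt_or_eq_dec _ _ Hle) as [Hlt | ->].
    + split; [intros; left; auto|intros [[_ ?]|[[? _]|[? _]]]; auto; lra].
    + replace ((-2) * (1/2) + 1) with 0 by field.
      replace (2 * (1/2) + -1) with 0 by field.
      assert (Ep0 := Ep i0); assert (Eq0 := Eq i0); rewrite E in Ep0; simpl in Ep0, Eq0.
      split; [tauto|intros [[? _]|[[? _]|[? _]]]; auto; lra].
  - rewrite Eq, clamp_val by lra.
    replace (2 * t - 1) with (2 * t + (-1)) by ring.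
    split; [intros; right; left; split; auto; lra|intros [[? _]|[[_ ?]|[_ ?]]]; auto; lra].
Qed.

Lemma CO_sub_left_half {X : TopSpace} (K : R -> Prop) (U : X -> Prop) (p q : I -> X) :
  CO_subbasic (K, U) -> CO_sub K U (rev_concat p q) -> CO_sub (left_half K) U p.
Proof.
  intros [HKI _] Hs s [t [Es [Kt Ht]]]; simpl in HKI; specialize (HKI t Kt).
  assert (Ut := Hs (clamp t)); rewrite clamp_val in Ut by lra; specialize (Ut Kt).
  unfold rev_concat in Ut; rewrite clamp_val in Ut by lra.
  destruct Rle_dec; [|lra].
  rewrite <- Es, clamp_proj in Ut; exact Ut.
Qed.

Lemma CO_sub_right_half {X : TopSpace} (K : R -> Prop) (U : X -> Prop) (p q : I -> X) :
  CO_subbasic (K, U) -> p i0 = q i0 ->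
  CO_sub K U (rev_concat p q) -> CO_sub (right_half K) U q.
Proof.
  intros [HKI _] E Hs s [t [Es [Kt Ht]]]; simpl in HKI; specialize (HKI t Kt).
  assert (Ut := Hs (clamp t)); rewrite clamp_val in Ut by lra; specialize (Ut Kt).
  unfold rev_concat in Ut; rewrite clamp_val in Ut by lra.
  destruct Rle_dec.
  - assert (t = 1/2) by lra; subst t.
    replace s with i0 by (apply I_val_inj; simpl; lra).
    rewrite <- E; replace i0 with (clamp (1 - 2 * (1/2))); auto.
    apply I_val_inj; rewrite clamp_val; simpl; lra.
  - rewrite <- Es, clamp_proj in Ut; exact Ut.
Qed.

Lemma CO_sub_rev_concat {X : TopSpace} (K : R -> Prop) (U : X -> Prop) (p q : I -> X) :
  CO_sub (left_half K) U p -> CO_sub (right_half K) U q -> CO_sub K U (rev_concat p q).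
Proof.
  intros Hp Hq [t Ht] Kt; unfold rev_concat; simpl in *.
  destruct Rle_dec.
  - apply Hp; rewrite clamp_val by lra; exists t; auto.
  - apply Hq; rewrite clamp_val by lra; exists t; repeat split; auto; lra.
Qed.

Definition CO_basic {X : TopSpace} (l : list ((R -> Prop) * (X -> Prop))) (g : I -> X) : Prop :=
  is_path g /\ forall KU, In KU l -> CO_sub (fst KU) (snd KU) g.

Lemma CO_basic_open {X : TopSpace} (l : list ((R -> Prop) * (X -> Prop))) :
  (forall KU, In KU l -> CO_subbasic KU) -> CO_open (CO_basic l).
Proof.
  intros Hl f _ [_ Hf]. exists l; split; [|split]; auto.
  intros g Hg Hs; split; auto.
Qed.

Definition map_compacts {X : TopSpace} (h : (R -> Prop) -> R -> Prop)
    (l : list ((R -> Prop) * (X -> Prop))) : list ((R -> Prop) * (X -> Prop)) :=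
  map (fun KU => (h (fst KU), snd KU)) l.

Lemma CO_subbasic_map_compacts {X : TopSpace} (h : (R -> Prop) -> R -> Prop)
    (l : list ((R -> Prop) * (X -> Prop))) :
  (forall K (U : X -> Prop), CO_subbasic (K, U) -> CO_subbasic (h K, U)) ->
  (forall KU, In KU l -> CO_subbasic KU) ->
  forall KU, In KU (map_compacts h l) -> CO_subbasic KU.
Proof.
  intros Hh Hl KU' HKU'; apply in_map_iff in HKU'.
  destruct HKU' as [[K U] [<- HKU]]; exact (Hh K U (Hl _ HKU)).
Qed.

Lemma CO_basic_map_compacts {X : TopSpace} (h : (R -> Prop) -> R -> Prop)
    (l : list ((R -> Prop) * (X -> Prop))) (g : I -> X) :
  CO_basic (map_compacts h l) g <->
  is_path g /\ forall KU, In KU l -> CO_sub (h (fst KU)) (snd KU) g.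
Proof.
  unfold CO_basic, map_compacts; split; intros [Hg Hs]; split; auto.
  - intros KU HKU; apply (Hs (h (fst KU), snd KU)), in_map_iff; eauto.
  - intros KU' HKU'; apply in_map_iff in HKU'.
    destruct HKU' as [KU [<- HKU]]; exact (Hs KU HKU).
Qed.

Definition well_ended_at_end {X : TopSpace} (p : I -> X) : Prop :=
  forall W : (I -> X) -> Prop, CO_open W -> W p ->
    exists V : X -> Prop, is_open X V /\ V (p i1) /\
      forall v, V v -> exists q : I -> X,
        is_path q /\ W q /\ q i0 = p i0 /\ q i1 = v.

Lemma well_ended_at_end_of_well_ended {X : TopSpace} (p : I -> X) :
  well_ended p -> well_ended_at_end p.
Proof.
  intros Hwe W HW Wp.
  destruct (Hwe W HW Wp) as [V0 [V1 [_ [V0p [HV1 [V1p Hq]]]]]].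
  exists V1; split; [exact HV1|split; [exact V1p|]].
  intros v V1v; exact (Hq (p i0) v V0p V1v).
Qed.

Lemma well_ended_rev_concat {X : TopSpace} (p q : I -> X) :
  is_path p -> is_path q -> p i0 = q i0 ->
  well_ended_at_end p -> well_ended_at_end q -> well_ended (rev_concat p q).
Proof.
  intros Hp Hq E Hwp Hwq W HW Wpq.
  destruct (HW _ (rev_concat_path p q Hp Hq E) Wpq) as [l [Hl [Hpq HlW]]].
  set (Wp := CO_basic (map_compacts left_half l)).
  set (Wq := CO_basic (map_compacts right_half l)).
  assert (Wp_p : Wp p).
  { apply CO_basic_map_compacts; split; auto.
    intros [K U] HKU; apply (CO_sub_left_half K U p q); [exact (Hl _ HKU)|exact (Hpq _ HKU)]. }
  assert (Wq_q : Wq q).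
  { apply CO_basic_map_compacts; split; auto.
    intros [K U] HKU; apply (CO_sub_right_half K U p q); [exact (Hl _ HKU)|exact E|exact (Hpq _ HKU)]. }
  destruct (Hwp Wp) as [V0 [HV0 [V0p Hp']]];
    [apply CO_basic_open, CO_subbasic_map_compacts; auto;
     intros; apply CO_subbasic_left_half; auto|auto|].
  destruct (Hwq Wq) as [V1 [HV1 [V1q Hq']]];
    [apply CO_basic_open, CO_subbasic_map_compacts; auto;
     intros; apply CO_subbasic_right_half; auto|auto|].
  exists V0, V1; rewrite rev_concat_i0, rev_concat_i1; repeat split; auto.
  intros a b V0a V1b.
  destruct (Hp' a V0a) as [qa [Hqa [Wqa [Eqa0 Eqa1]]]].
  destruct (Hq' b V1b) as [qb [Hqb [Wqb [Eqb0 Eqb1]]]].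
  apply CO_basic_map_compacts in Wqa as [_ Wqa].
  apply CO_basic_map_compacts in Wqb as [_ Wqb].
  assert (Hqab : is_path (rev_concat qa qb)) by (apply rev_concat_path; [exact Hqa|exact Hqb|congruence]).
  exists (rev_concat qa qb); rewrite rev_concat_i0, rev_concat_i1; repeat split; auto.
  apply HlW; auto.
  intros KU HKU; apply CO_sub_rev_concat; auto.
Qed.

Theorem lemma4p15 (X : TopSpace) (x0 : X) :
  wep_connected X <->
  (forall x : X, exists p : I -> X,
     is_path p /\ p i0 = x0 /\ p i1 = x /\
     (* every open nbhd of p in P(X,x0) has the form W ∩ P(X,x0), W open in P(X) *)
     forall W : (I -> X) -> Prop, CO_open W -> W p ->
       exists V : X -> Prop, is_open X V /\ V x /\
         forall v, V v -> exists q : I -> X,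
           is_path q /\ W q /\ q i0 = x0 /\ q i1 = v).
Proof.
  split.
  - intros Hwep x; destruct (Hwep x0 x) as [p [Hp [<- [<- Hwe]]]].
    exists p; repeat split; auto.
    exact (well_ended_at_end_of_well_ended p Hwe).
  - intros Hbased x y.
    destruct (Hbased x) as [px [Hpx [Ex0 [<- Hx]]]].
    destruct (Hbased y) as [py [Hpy [Ey0 [<- Hy]]]].
    assert (Hx' : well_ended_at_end px) by (rewrite <- Ex0 in Hx; exact Hx).
    assert (Hy' : well_ended_at_end py) by (rewrite <- Ey0 in Hy; exact Hy).
    exists (rev_concat px py).
    rewrite rev_concat_i0, rev_concat_i1; repeat split; auto.
    + apply rev_concat_path; auto; congruence.
    + apply well_ended_rev_concat; auto; congruence.
Qed.
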